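(* For every instance $(N,C,\mathbf{A},k)$ with $|N|=n$ that has at least one cohesive group, the committee output by GreedyAV has JR degree at least $\frac{n}{k^2}$.
   Context: An instance consists of voters $N=\{1,\dots,n\}$, candidates $C$, approval ballots $A_i\subseteq C$ for $i\in N$, and a committee size $k$ with $1\le k\le|C|$. A set $N'\subseteq N$ is a cohesive group if $|N'|\ge n/k$ and $|\bigcap_{i\in N'}A_i|\ge 1$. A size-$k$ committee $W\subseteq C$ achieves JR degree $c$ if every cohesive group contains at least $c$ voters $i$ with $|A_i\cap W|\ge1$. GreedyAV: start with $W=\emptyset$ and the set $R=N$ of remaining voters; repeat $k$ times: choose a candidate $c\notin W$ approved by the maximum number of voters in $R$ (ties broken arbitrarily), add $c$ to $W$, and remove from $R$ all voters approving $c$; output $W$. *)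

From mathcomp Require Import all_boot.
Set Implicit Arguments. Unset Strict Implicit. Unset Printing Implicit Defensive.

Section Approval.
Variables (n : nat) (C : finType) (A : 'I_n -> {set C}).

Definition cohesive (k : nat) (G : {set 'I_n}) : Prop :=
  n <= #|G| * k /\ exists c : C, forall i, i \in G -> c \in A i.

Definition achieves_JR_degree (k : nat) (W : {set C}) (c : nat) : Prop :=
  forall G : {set 'I_n}, cohesive k G ->
    c <= #|[set i in G | A i :&: W != set0]|.

Definition remaining (S : seq C) : {set 'I_n} :=
  [set i | all (fun c => c \notin A i) S].

Definition score (S : seq C) (c : C) : nat :=
  #|[set i in remaining S | c \in A i]|.

(* s is a possible execution of GreedyAV (for some tie-breaking):
   s lists the k chosen candidates in order of selection, each one new and
   of maximum score among the remaining voters over all unchosen candidates. *)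
Definition greedyAV_run (k : nat) (s : seq C) : Prop :=
  [/\ uniq s, size s = k &
      forall (j : nat) (c : C), j < k -> c \notin take j s ->
        score (take j s) c <= score (take j s) (nth c s j)].

End Approval.

From mathcomp Require Import all_boot.
From mathcomp Require Import zify.

(* Let G be cohesive, all of its voters approving c, and let y be the number
   of voters of G still uncovered after the k greedy rounds.  As long as c is
   not chosen, every round removes at least as many voters as c would, hence
   at least y (and at least |G| in the first round); since the y uncovered
   voters of G are never removed, |G| + k y <= n; if c is chosen, y = 0 and
   this is trivial.  Together with k |G| >= n it gives k^2 (|G| - y) >= n. *)

Section Approval.
Variables (n : nat) (C : finType) (A : 'I_n -> {set C}).

Lemma remaining_nil : remaining A [::] = [set: 'I_n].
Proof. by apply/setP => i; rewrite !inE. Qed.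

Lemma remaining_rcons S c :
  remaining A (rcons S c) = remaining A S :\: [set i | c \in A i].
Proof. by apply/setP => i; rewrite !inE all_rcons andbC. Qed.

Lemma card_remaining_rcons S c :
  #|remaining A (rcons S c)| + score A S c = #|remaining A S|.
Proof.
by rewrite -(cardsID [set i | c \in A i] (remaining A S)) addnC remaining_rcons
  /score setIdE.
Qed.

Lemma card_approving_remaining_le_score {G : {set 'I_n}} {c : C} S :
  (forall i, i \in G -> c \in A i) -> #|G :&: remaining A S| <= score A S c.
Proof.
move=> approve; apply: subset_leq_card; apply/subsetP => i.
by rewrite !inE => /andP[iG ->]; rewrite approve.
Qed.

Lemma covered_setD_remaining (G : {set 'I_n}) s :
  [set i in G | A i :&: [set x in s] != set0] = G :\: remaining A s.
Proof.
apply/setP => i; rewrite !inE andbC; congr (_ && _).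
apply/set0Pn/allPn => [[c] | [c cs]].
  by rewrite !inE => /andP[cAi cs]; exists c; rewrite ?cAi.
by rewrite negbK => cAi; exists c; rewrite !inE cAi.
Qed.

Section GreedyRun.
Variables (k : nat) (s : seq C) (G : {set 'I_n}) (c : C).
Hypothesis run : greedyAV_run A k s.
Hypothesis approve : forall i, i \in G -> c \in A i.
Hypothesis c_notin_s : c \notin s.

Let R j := remaining A (take j s).
Let y j := #|G :&: R j|.

Lemma remaining_take_succ j :
  j < k -> R j.+1 = R j :\: [set i | nth c s j \in A i].
Proof.
have [_ size_s _] := run; move=> jk.
by rewrite /R (take_nth c) ?size_s // remaining_rcons.
Qed.

Lemma greedy_round_removes_uncovered j : j < k -> #|R j.+1| + y j <= #|R j|.
Proof.
have [_ size_s greedy] := run; move=> jk.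
rewrite /R -(card_remaining_rcons (take j s) (nth c s j)) -(take_nth c) ?size_s //.
rewrite leq_add2l.
apply: leq_trans (card_approving_remaining_le_score _ approve) (greedy j c jk _).
by apply: contra c_notin_s; apply: mem_take.
Qed.

Lemma uncovered_take_succ j : j < k -> y j.+1 <= y j.
Proof.
by move=> jk; rewrite /y remaining_take_succ //; apply/subset_leq_card/setIS/subsetDl.
Qed.

Lemma greedy_removed_prefix m : m < k -> #|R m.+1| + #|G| + m * y m.+1 <= n.
Proof.
elim: m => [|m IH] mk.
  have := greedy_round_removes_uncovered 0 mk.
  rewrite /y /R take0 remaining_nil setIT cardsT card_ord; lia.
have := IH (ltnW mk); have := greedy_round_removes_uncovered _ mk.
have := uncovered_take_succ _ mk; nia.
Qed.

Lemma greedy_uncovered_bound : 0 < k -> #|G| + k * #|G :&: remaining A s| <= n.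
Proof.
have [_ size_s _] := run; move=> k_gt0.
have := greedy_removed_prefix k.-1; rewrite prednK // => /(_ (leqnn k)).
have : y k <= #|R k| by apply/subset_leq_card/subsetIr.
by rewrite /y /R -size_s take_size; nia.
Qed.

End GreedyRun.

Lemma cohesive_uncovered_bound {k : nat} {s : seq C} {G : {set 'I_n}} :
  0 < k -> greedyAV_run A k s -> cohesive A k G ->
  #|G| + k * #|G :&: remaining A s| <= n.
Proof.
move=> k_gt0 run [_ [c approve]].
have [c_in_s | c_notin_s] := boolP (c \in s); last first.
  exact: (greedy_uncovered_bound _ _ _ _ run approve c_notin_s k_gt0).
have -> : G :&: remaining A s = set0.
  apply/setP => i; rewrite !inE; apply/negbTE; apply/andP => -[iG /allP].
  by move/(_ c c_in_s); rewrite approve.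
by rewrite cards0 muln0 addn0 -[leqRHS]card_ord max_card.
Qed.

Lemma cohesive_covered_bound {k : nat} {s : seq C} {G : {set 'I_n}} :
  0 < k -> greedyAV_run A k s -> cohesive A k G ->
  n <= #|[set i in G | A i :&: [set x in s] != set0]| * k ^ 2.
Proof.
move=> k_gt0 run cohG; have := cohesive_uncovered_bound k_gt0 run cohG.
have [nGk _] := cohG.
rewrite covered_setD_remaining cardsD; nia.
Qed.

End Approval.

Theorem proposition2 (n : nat) (C : finType) (A : 'I_n -> {set C}) (k : nat) :
  1 <= k <= #|C| ->
  (exists G : {set 'I_n}, cohesive A k G) ->
  forall s : seq C, greedyAV_run A k s ->
  exists c : nat, n <= c * k ^ 2 /\ achieves_JR_degree A k [set x in s] c.
Proof.
move=> /andP[k_gt0 _] _ s run.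
have bound_exists : exists c, n <= c * k ^ 2 by exists n; nia.
exists (ex_minn bound_exists); case: ex_minnP => c nck least; split => // G cohG.
exact/least/cohesive_covered_bound.
Qed.
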